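(* For each SES $\sigma=(E,\#,\to,\triangleright)$ there is an RCES $\rho$ (over the same event set $E$) such that $\sigma$ and $\rho$ are transition equivalent.
   Context: SES: $\sigma=(E,\#,\to,\triangleright)$ with $\#\subseteq E^2$ irreflexive and symmetric, $\to\subseteq E^2$ an arbitrary binary relation, $\triangleright\subseteq E^3$ with $(c,d,t)\in\triangleright$ implying $c\to t$. $\mathrm{ic}(e)=\{e'\mid e'\to e\}$, $\mathrm{dc}(H,e)=\{e'\mid\exists d\in H.(e',d,e)\in\triangleright\}$. SES transitions: for $X,Y\subseteq E$, $X\to_s Y$ iff $X\subseteq Y$, $\neg(e\#e')$ for all $e,e'\in Y$, and $\mathrm{ic}(e)\setminus\mathrm{dc}(X,e)\subseteq X$ for all $e\in Y\setminus X$. Event structure for resolvable conflict (RCES): a pair $\rho=(E,\vdash)$ with $\vdash\subseteq 2^E\times 2^E$. For $X,Y\subseteq E$, $X\to_{rc}Y$ iff $X\subseteq Y$ and for every $Z\subseteq Y$ there is $W\subseteq X$ with $W\vdash Z$. For an event structure $\mu$ with transition relation $\to_\mu$ on subsets of its events, $\mathcal{C}(\mu)$ is the set of sets reachable from $\emptyset$ by finitely many $\to_\mu$-steps. Two such structures $\mu,\mu'$ are transition equivalent iff $\mathcal{C}(\mu)=\mathcal{C}(\mu')$ and for all $X,Y\in\mathcal{C}(\mu)$: $X\to_\mu Y$ iff $X\to_{\mu'}Y$. *)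

Set Implicit Arguments.

Definition eset (E : Type) := E -> Prop.
Definition subset {E : Type} (X Y : eset E) : Prop := forall e, X e -> Y e.
Definition emptyset {E : Type} : eset E := fun _ => False.

Record SES (E : Type) := mkSES {
  conflict : E -> E -> Prop;
  enab : E -> E -> Prop;                    (* enab e' e  means  e' -> e *)
  shrink : E -> E -> E -> Prop;             (* shrink c d t  means (c,d,t) in |> *)
  conflict_irrefl : forall e, ~ conflict e e;
  conflict_sym : forall e e', conflict e e' -> conflict e' e;
  shrink_enab : forall c d t, shrink c d t -> enab c t
}.

Definition ic {E} (s : SES E) (e : E) : eset E := fun e' => enab s e' e.
Definition dc {E} (s : SES E) (H : eset E) (e : E) : eset E :=
  fun e' => exists d, H d /\ shrink s e' d e.

Definition ses_step {E} (s : SES E) (X Y : eset E) : Prop :=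
  subset X Y /\
  (forall e e', Y e -> Y e' -> ~ conflict s e e') /\
  (forall e, Y e -> ~ X e ->
     forall e', ic s e e' -> ~ dc s X e e' -> X e').

Definition RCES (E : Type) := eset E -> eset E -> Prop.

Definition rc_step {E} (r : RCES E) (X Y : eset E) : Prop :=
  subset X Y /\
  (forall Z, subset Z Y -> exists W, subset W X /\ r W Z).

Inductive reachable {E} (step : eset E -> eset E -> Prop) : eset E -> Prop :=
| reach_empty : reachable step emptyset
| reach_step : forall X Y, reachable step X -> step X Y -> reachable step Y.

Definition transition_equivalent {E}
  (step1 step2 : eset E -> eset E -> Prop) : Prop :=
  (forall X, reachable step1 X <-> reachable step2 X) /\
  (forall X Y, reachable step1 X -> reachable step1 Y ->
     (step1 X Y <-> step2 X Y)).


(* Let W |- Z hold iff Z fits inside the target of some SES transition from W.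
   An SES transition X ->_s Y stays a transition when the source is enlarged
   within Y and the target shrunk above the source, since the dropped causes
   dc(X, e) only grow with X.  Hence X ->_rc Y, which asks for some W within X
   with W |- Y, holds exactly when X ->_s Y; equal step relations give equal
   reachable sets. *)

Definition rces_of_ses {E} (s : SES E) : RCES E :=
  fun W Z => exists Y, subset Z Y /\ ses_step s W Y.

Lemma dc_mono {E} (s : SES E) (H H' : eset E) (e : E) :
  subset H H' -> subset (dc s H e) (dc s H' e).
Proof.
  intros HH' e' [d [Hd Hs]].
  exists d; split; [apply HH'; exact Hd | exact Hs].
Qed.

Lemma ses_step_weaken {E} (s : SES E) (W X Y Y' : eset E) :
  subset W X -> subset X Y -> subset Y Y' ->
  ses_step s W Y' -> ses_step s X Y.
Proof.
  intros HWX HXY HYY' [_ [Hconf Hcause]].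
  split; [exact HXY |]. split.
  - intros e e' He He'. apply Hconf; apply HYY'; assumption.
  - intros e HYe HnXe e' Hic HnDc.
    apply HWX. apply (Hcause e (HYY' e HYe)).
    + intro HWe. apply HnXe, HWX, HWe.
    + exact Hic.
    + intro HDc. apply HnDc. exact (dc_mono s W X e HWX e' HDc).
Qed.

Lemma rc_step_rces_of_ses {E} (s : SES E) (X Y : eset E) :
  rc_step (rces_of_ses s) X Y <-> ses_step s X Y.
Proof.
  split.
  - intros [HXY Henab].
    destruct (Henab Y (fun _ h => h)) as [W [HWX [Y' [HYY' Hstep]]]].
    exact (ses_step_weaken s W X Y Y' HWX HXY HYY' Hstep).
  - intros Hstep. split; [exact (proj1 Hstep) |].
    intros Z HZY. exists X. split; [intros e h; exact h |].
    exists Y. split; assumption.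
Qed.

Lemma reachable_mono {E} (step1 step2 : eset E -> eset E -> Prop) :
  (forall X Y, step1 X Y -> step2 X Y) ->
  forall X, reachable step1 X -> reachable step2 X.
Proof.
  intros Hstep X HX. induction HX as [| X Y _ IH HXY].
  - apply reach_empty.
  - eapply reach_step; [exact IH | exact (Hstep X Y HXY)].
Qed.

Lemma transition_equivalent_of_steps {E} (step1 step2 : eset E -> eset E -> Prop) :
  (forall X Y, step1 X Y <-> step2 X Y) -> transition_equivalent step1 step2.
Proof.
  intros Hstep. split.
  - intros X. split; apply reachable_mono; intros Y Z; apply Hstep.
  - intros X Y _ _. apply Hstep.
Qed.

Theorem lemma8 (E : Type) (sigma : SES E) :
  exists rho : RCES E,
    transition_equivalent (ses_step sigma) (rc_step rho).
Proof.
  exists (rces_of_ses sigma).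
  apply transition_equivalent_of_steps.
  intros X Y. apply iff_sym, rc_step_rces_of_ses.
Qed.
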